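(* Let $\lambda>0$, $p\in\mathbb{N}$, and let $f\in C^p\left[0,\frac12\lambda^{-1/2}\right]$ be complex-valued with $f(0)=0$ and $\max_{[0,\frac12\lambda^{-1/2}]}|f^{(p)}|\le C(p)\,\lambda^{\frac p2+1}$ for some constant $C(p)>0$. Then for all $\varphi_0,\varphi_1\in\mathbb{R}$, $$\int_0^{\frac12\lambda^{-1/2}}\left|f(t)-e^{i\varphi_1t+i\varphi_0}\right|^2dt\ \ge\ \frac{\lambda^{-1/2}}{9}\min\left\{4^{-p-\frac52},\ 4^{-\frac{p+3}{2}}\,6^{\frac1p}\,C(p)^{-\frac1p}\,\lambda^{-\frac1p}\right\}.$$ *)

From Stdlib Require Import Reals.
From Coquelicot Require Import Coquelicot.
Open Scope R_scope.

Definition cexpi (theta : R) : C := (cos theta, sin theta).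

Definition is_derive_within (a b : R) (g : R -> C) (x : R) (l : C) : Prop :=
  filterlim (fun h : R => scal (/ h) (minus (g (x + h)) (g x)))
    (within (fun h : R => h <> 0 /\ a <= x + h <= b) (locally 0))
    (locally l).

Definition continuous_on_cc (a b : R) (g : R -> C) : Prop :=
  forall x, a <= x <= b ->
    filterlim g (within (fun y : R => a <= y <= b) (locally x)) (locally (g x)).

(* D is a witness that f is in C^p[a,b]: D 0 = f on [a,b], D (k+1) is the
   derivative of D k on [a,b] for k < p, and D k is continuous on [a,b]
   for k <= p.  D p is then the p-th derivative f^(p) on [a,b]. *)
Definition Cp_derivs (p : nat) (a b : R) (f : R -> C) (D : nat -> R -> C) : Prop :=
  (forall x, a <= x <= b -> D 0%nat x = f x) /\
  (forall k, (k < p)%nat -> forall x, a <= x <= b ->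
     is_derive_within a b (D k) x (D (S k) x)) /\
  (forall k, (k <= p)%nat -> continuous_on_cc a b (D k)).

(* Fix b <= L with M b^p <= p!, where M bounds f^(p).  Since f(0) = 0, Taylor's
   formula gives f(t) = t S(t) + r(t) with S a polynomial of degree < p and
   |r(t)| <= (t/b)^p <= t/b on [0, b].  With n = p - 1, h = b/n and th = 1/(4n),
   look at the n windows [(j+1-th)h, (j+1)h].  If |f| >= 3/2 on a whole window,
   then |f - e^(i phi)| >= 1/2 there.  Otherwise every window contains a node y_j
   with |y_j S(y_j)| <= |f(y_j)| + 1 < 5/2, and Lagrange interpolation at these
   nodes (whose basis at 0 is controlled by binomial coefficients) bounds |S| by
   5 n 2^n / b near 0; then |f| <= 1/3, hence |f - e^(i phi)| >= 2/3, on an initial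
   interval of length b / (3 (5 n 2^n + 1)).  Either way the integral is at least
   4 b / (27 (5 n 2^n + 1)); choosing b = min(L, (p!/M)^(1/p)) and using
   p! >= 3 (p/3)^p yields the two constants. *)

From Stdlib Require Import Reals Lra Lia Factorial Classical.
From Coquelicot Require Import Coquelicot.
From mathcomp Require ssreflect ssrfun ssrbool eqtype ssrnat seq fintype bigop.
From mathcomp Require ssralg poly qpoly Rstruct.
Open Scope R_scope.

(** * Continuity and integrals on a closed interval *)

Definition clamp (a b x : R) : R := Rmax a (Rmin b x).

Lemma clamp_in a b x : a <= b -> a <= clamp a b x <= b.
Proof. intros; unfold clamp, Rmax, Rmin; repeat destruct Rle_dec; lra. Qed.

Lemma clamp_id a b x : a <= x <= b -> clamp a b x = x.
Proof. intros; unfold clamp, Rmax, Rmin; repeat destruct Rle_dec; lra. Qed.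

Lemma clamp_lipschitz a b x y : a <= b -> Rabs (clamp a b x - clamp a b y) <= Rabs (x - y).
Proof.
  intros; unfold clamp, Rmax, Rmin; repeat destruct Rle_dec;
  unfold Rabs; repeat destruct Rcase_abs; lra.
Qed.

Lemma continuous_clamp a b x : a <= b -> continuous (clamp a b) x.
Proof.
  intros Hab P [eps Heps]; exists eps; intros y Hy; apply Heps.
  pose proof (clamp_lipschitz a b y x Hab); change (Rabs (y - x) < eps) in Hy.
  change (Rabs (clamp a b y - clamp a b x) < eps); lra.
Qed.

Lemma continuous_comp_clamp {U : UniformSpace} (g : R -> U) a b x : a <= b ->
  (forall y, a <= y <= b ->
     filterlim g (within (fun z => a <= z <= b) (locally y)) (locally (g y))) ->
  continuous (fun z => g (clamp a b z)) x.
Proof.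
  intros Hab Hg P HP.
  destruct (Hg (clamp a b x) (clamp_in a b x Hab) P HP) as [eps Heps].
  assert (Hnear : filtermap (clamp a b) (locally x) (fun z => a <= z <= b -> P (g z)))
    by (apply continuous_clamp; auto; exists eps; exact Heps).
  destruct Hnear as [d Hd]; exists d.
  intros z Hz; exact (Hd z Hz (clamp_in a b z Hab)).
Qed.

Lemma within_restrict {U : UniformSpace} (g : R -> U) a b a' b' y :
  a <= a' -> b' <= b ->
  filterlim g (within (fun z => a <= z <= b) (locally y)) (locally (g y)) ->
  filterlim g (within (fun z => a' <= z <= b') (locally y)) (locally (g y)).
Proof.
  intros Ha Hb H P HP; destruct (H P HP) as [e He]; exists e.
  intros z Hz Hz'; apply He; auto; lra.
Qed.

Lemma Cmod_sq (z : C) : Cmod z ^ 2 = fst z ^ 2 + snd z ^ 2.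
Proof.
  unfold Cmod; rewrite pow2_sqrt; auto.
  apply Rplus_le_le_0_compat; apply pow2_ge_0.
Qed.

Lemma continuous_sq_diff (u v : R -> R) x : continuous u x -> continuous v x ->
  continuous (fun z => (u z - v z) ^ 2) x.
Proof.
  intros Hu Hv.
  assert (Huv : continuous (fun z => u z - v z) x) by (apply (continuous_minus u v); auto).
  apply (continuous_ext (fun z => (u z - v z) * (u z - v z))).
  { intros z; change ((u z - v z) * (u z - v z) = (u z - v z) ^ 2); ring. }
  apply (continuous_mult (fun z => u z - v z) (fun z => u z - v z)); auto.
Qed.

Lemma ex_RInt_of_continuous_extension (g h : R -> R) a b : a <= b ->
  (forall x, a <= x <= b -> h x = g x) -> (forall x, continuous h x) -> ex_RInt g a b.
Proof.
  intros Hab Hhg Hh; apply (ex_RInt_ext h).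
  - intros x Hx; rewrite Rmin_left, Rmax_right in Hx by lra; apply Hhg; lra.
  - apply (@ex_RInt_continuous R_CompleteNormedModule); auto.
Qed.

Lemma RInt_ge_on_subinterval (g : R -> R) a b u v c :
  a <= u <= v -> v <= b -> ex_RInt g a b ->
  (forall x, a <= x <= b -> 0 <= g x) -> (forall x, u < x < v -> c <= g x) ->
  c * (v - u) <= RInt g a b.
Proof.
  intros Huv Hvb Hg Hpos Hc.
  assert (Hau : ex_RInt g a u) by (apply (ex_RInt_Chasles_1 g a u b); auto; lra).
  assert (Hub : ex_RInt g u b) by (apply (ex_RInt_Chasles_2 g a u b); auto; lra).
  assert (Huv' : ex_RInt g u v) by (apply (ex_RInt_Chasles_1 g u v b); auto; lra).
  assert (Hvb' : ex_RInt g v b) by (apply (ex_RInt_Chasles_2 g u v b); auto; lra).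
  rewrite <- (RInt_Chasles g a u b), <- (RInt_Chasles g u v b) by assumption.
  assert (H0 : 0 <= RInt g a u) by (apply RInt_ge_0; [lra | auto | intros; apply Hpos; lra]).
  assert (H1 : 0 <= RInt g v b) by (apply RInt_ge_0; [lra | auto | intros; apply Hpos; lra]).
  assert (H2 : c * (v - u) <= RInt g u v).
  { replace (c * (v - u)) with (RInt (fun _ => c) u v)
      by (rewrite RInt_const; apply Rmult_comm).
    apply RInt_le; [lra | apply ex_RInt_const | auto | auto]. }
  change plus with Rplus; lra.
Qed.

Lemma Cmod_cexpi th : Cmod (cexpi th) = 1.
Proof.
  unfold Cmod, cexpi; simpl; pose proof (sin2_cos2 th) as H; unfold Rsqr in H.
  replace (cos th * (cos th * 1) + sin th * (sin th * 1)) with 1 by lra; apply sqrt_1.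
Qed.

Lemma Cmod_sub_ge (z w : C) : Rabs (Cmod z - Cmod w) <= Cmod (z - w).
Proof.
  pose proof (Cmod_triangle (z - w) w) as Hz.
  pose proof (Cmod_triangle (w - z) z) as Hw.
  replace (z - w + w)%C with z in Hz by (apply injective_projections; simpl; ring).
  replace (w - z + z)%C with w in Hw by (apply injective_projections; simpl; ring).
  replace (w - z)%C with (- (z - w))%C in Hw by (apply injective_projections; simpl; ring).
  rewrite Cmod_opp in Hw; apply Rabs_le; lra.
Qed.

Section DistanceToCexpi.

Variables (f : R -> C) (L phi0 phi1 : R).
Hypothesis HL : 0 <= L.
Hypothesis Hf : continuous_on_cc 0 L f.

Let J := RInt (fun t => Cmod (f t - cexpi (phi1 * t + phi0)) ^ 2) 0 L.

Lemma ex_RInt_dist_cexpi :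
  ex_RInt (fun t => Cmod (f t - cexpi (phi1 * t + phi0)) ^ 2) 0 L.
Proof.
  set (fc := fun z => f (clamp 0 L z)).
  apply (ex_RInt_of_continuous_extension _
    (fun z => (fst (fc z) - cos (phi1 * z + phi0)) ^ 2
            + (snd (fc z) - sin (phi1 * z + phi0)) ^ 2)); auto.
  { intros z Hz; unfold fc; rewrite clamp_id, Cmod_sq by auto; reflexivity. }
  intro x; assert (Hfc : continuous fc x) by (apply continuous_comp_clamp; auto).
  apply (@continuous_plus _ _ R_NormedModule (fun z => (fst (fc z) - cos (phi1 * z + phi0)) ^ 2)
                         (fun z => (snd (fc z) - sin (phi1 * z + phi0)) ^ 2));
    apply continuous_sq_diff.
  - apply (continuous_comp fc fst); auto; apply continuous_fst.
  - apply (@ex_derive_continuous R_AbsRing R_NormedModule (fun z => cos (phi1 * z + phi0))).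
    auto_derive; auto.
  - apply (continuous_comp fc snd); auto; apply continuous_snd.
  - apply (@ex_derive_continuous R_AbsRing R_NormedModule (fun z => sin (phi1 * z + phi0))).
    auto_derive; auto.
Qed.

Lemma dist_cexpi_integral_ge u v c : 0 <= u <= v -> v <= L ->
  (forall t, u < t < v -> c <= Cmod (f t - cexpi (phi1 * t + phi0)) ^ 2) ->
  c * (v - u) <= J.
Proof.
  intros Huv HvL Hc; apply RInt_ge_on_subinterval; auto.
  - apply ex_RInt_dist_cexpi.
  - intros; apply pow2_ge_0.
Qed.

Lemma dist_cexpi_integral_ge_small u v r : 0 <= u <= v -> v <= L -> r <= 1 ->
  (forall t, u < t < v -> Cmod (f t) <= r) -> (1 - r) ^ 2 * (v - u) <= J.
Proof.
  intros Huv HvL Hr Hsmall; apply dist_cexpi_integral_ge; auto.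
  intros t Ht; pose proof (Hsmall t Ht).
  pose proof (Cmod_sub_ge (f t) (cexpi (phi1 * t + phi0))) as Hd.
  rewrite Cmod_cexpi, Rabs_minus_sym, Rabs_right in Hd by lra.
  apply pow_incr; lra.
Qed.

Lemma dist_cexpi_integral_ge_large u v r : 0 <= u <= v -> v <= L -> 1 <= r ->
  (forall t, u < t < v -> r <= Cmod (f t)) -> (r - 1) ^ 2 * (v - u) <= J.
Proof.
  intros Huv HvL Hr Hlarge; apply dist_cexpi_integral_ge; auto.
  intros t Ht; pose proof (Hlarge t Ht).
  pose proof (Cmod_sub_ge (f t) (cexpi (phi1 * t + phi0))) as Hd.
  rewrite Cmod_cexpi, Rabs_right in Hd by lra.
  apply pow_incr; lra.
Qed.

End DistanceToCexpi.

(** * One-sided derivatives and a mean value inequality *)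

Lemma filterlim_C_components {T} (F : (T -> Prop) -> Prop) {FF : Filter F}
    (q : T -> C) (l : C) :
  filterlim (fun t => fst (q t)) F (locally (fst l)) ->
  filterlim (fun t => snd (q t)) F (locally (snd l)) ->
  filterlim q F (locally l).
Proof.
  intros H1 H2 P [e He].
  assert (A1 : F (fun t => ball (fst l) e (fst (q t)))) by (apply H1; exists e; auto).
  assert (A2 : F (fun t => ball (snd l) e (snd (q t)))) by (apply H2; exists e; auto).
  unfold filtermap; eapply filter_imp; [| exact (filter_and _ _ A1 A2)].
  intros t [B1 B2]; apply He; destruct l, (q t); split; assumption.
Qed.

Lemma is_derive_within_interior a b (g : R -> C) x l : a < x < b ->
  is_derive_within a b g x l ->
  derivable_pt_lim (fun s => fst (g s)) x (fst l) /\
  derivable_pt_lim (fun s => snd (g s)) x (snd l).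
Proof.
  intros Hx Hd.
  assert (Hnear : forall eps, 0 < eps -> exists delta : posreal, forall h, h <> 0 ->
            Rabs h < delta -> ball l eps (scal (/ h) (minus (g (x + h)) (g x)))).
  { intros eps Heps.
    destruct (Hd (ball l eps) (locally_ball l (mkposreal eps Heps))) as [d Hd'].
    assert (Hdp : 0 < Rmin d (Rmin (x - a) (b - x))) by (destruct d; simpl; repeat apply Rmin_pos; lra).
    exists (mkposreal _ Hdp); intros h Hh0 Hh; simpl in Hh.
    pose proof (Rmin_l d (Rmin (x - a) (b - x))); pose proof (Rmin_r d (Rmin (x - a) (b - x))).
    pose proof (Rmin_l (x - a) (b - x)); pose proof (Rmin_r (x - a) (b - x)).
    apply Hd'.
    - change (Rabs (h - 0) < d); rewrite Rminus_0_r; lra.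
    - split; auto; apply Rabs_lt_between in Hh; lra. }
  split; intros eps Heps; destruct (Hnear eps Heps) as [d Hd'];
    exists d; intros h Hh0 Hh; destruct (Hd' h Hh0 Hh) as [H1 H2];
    unfold Rdiv; rewrite Rmult_comm; assumption.
Qed.

Lemma is_derive_within_of_components a b (g : R -> C) x l :
  derivable_pt_lim (fun s => fst (g s)) x (fst l) ->
  derivable_pt_lim (fun s => snd (g s)) x (snd l) ->
  is_derive_within a b g x l.
Proof.
  assert (Hcomp : forall u lu, derivable_pt_lim u x lu ->
    filterlim (fun h => / h * (u (x + h) - u x))
      (within (fun h : R => h <> 0 /\ a <= x + h <= b) (locally 0)) (locally lu)).
  { intros u lu Hu P [e He]; destruct (Hu e (cond_pos e)) as [d Hd].
    exists d; intros h Hh [Hh0 _]; apply He.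
    change (Rabs (h - 0) < d) in Hh; rewrite Rminus_0_r in Hh.
    change (Rabs (/ h * (u (x + h) - u x) - lu) < e).
    rewrite Rmult_comm; exact (Hd h Hh0 Hh). }
  intros H1 H2; apply filterlim_C_components; [apply within_filter, locally_filter | |].
  - apply (Hcomp (fun s => fst (g s))); auto.
  - apply (Hcomp (fun s => snd (g s))); auto.
Qed.

Lemma continuous_within_of_components (g : R -> C) (D : R -> Prop) y :
  continuity_pt (fun s => fst (g s)) y -> continuity_pt (fun s => snd (g s)) y ->
  filterlim g (within D (locally y)) (locally (g y)).
Proof.
  intros H1 H2; apply continuity_pt_filterlim in H1; apply continuity_pt_filterlim in H2.
  apply filterlim_C_components; [apply within_filter, locally_filter | |].
  - intros P HP; destruct (H1 P HP) as [e He]; exists e; auto.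
  - intros P HP; destruct (H2 P HP) as [e He]; exists e; auto.
Qed.

Lemma is_derive_within_minus a b (g1 g2 : R -> C) x l1 l2 :
  is_derive_within a b g1 x l1 -> is_derive_within a b g2 x l2 ->
  is_derive_within a b (fun s => g1 s - g2 s)%C x (l1 - l2)%C.
Proof.
  unfold is_derive_within; intros H1 H2.
  apply filterlim_ext with (fun h => plus (scal (/ h) (minus (g1 (x + h)) (g1 x)))
                                     (opp (scal (/ h) (minus (g2 (x + h)) (g2 x))))).
  { intros h; apply injective_projections; simpl;
      unfold plus, opp, scal, mult; simpl; unfold mult, plus; simpl; ring. }
  eapply (filterlim_comp_2 _ _ (@plus C_AbelianGroup)); [exact H1 | |].
  - eapply filterlim_comp; [exact H2 | apply (@filterlim_opp R_AbsRing C_R_NormedModule)].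
  - apply (@filterlim_plus R_AbsRing C_R_NormedModule).
Qed.

Lemma continuous_within_minus (D : R -> Prop) (g1 g2 : R -> C) y :
  filterlim g1 (within D (locally y)) (locally (g1 y)) ->
  filterlim g2 (within D (locally y)) (locally (g2 y)) ->
  filterlim (fun s => g1 s - g2 s)%C (within D (locally y)) (locally (g1 y - g2 y)%C).
Proof.
  intros H1 H2.
  eapply (filterlim_comp_2 _ _ (@plus C_AbelianGroup)); [exact H1 | |].
  - eapply filterlim_comp; [exact H2 | apply (@filterlim_opp R_AbsRing C_R_NormedModule)].
  - apply (@filterlim_plus R_AbsRing C_R_NormedModule).
Qed.

Lemma nonincreasing_of_deriv_nonpos (phi dphi : R -> R) a b : a < b ->
  (forall y, a <= y <= b -> continuous (fun z => phi (clamp a b z)) y) ->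
  (forall x, a < x < b -> derivable_pt_lim phi x (dphi x)) ->
  (forall x, a < x < b -> dphi x <= 0) -> phi b <= phi a.
Proof.
  intros Hab Hc Hd Hneg.
  (* [MVT_gen] may return an endpoint, where [dphi] is not controlled. *)
  destruct (MVT_gen (fun z => phi (clamp a b z)) a b (fun x => Rmin 0 (dphi x)))
    as [c [_ Hmvt]].
  - rewrite Rmin_left, Rmax_right by lra; intros x Hx.
    rewrite Rmin_right by (apply Hneg; auto).
    apply (is_derive_ext_loc phi); [| apply is_derive_Reals, Hd; auto].
    apply (locally_interval _ x a b); simpl; try lra.
    intros y Hay Hyb; rewrite clamp_id by lra; reflexivity.
  - rewrite Rmin_left, Rmax_right by lra; intros x Hx.
    apply continuity_pt_filterlim, Hc; lra.
  - rewrite !clamp_id in Hmvt by lra.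
    pose proof (Rmin_l 0 (dphi c)); nra.
Qed.

Definition dotC (u z : C) : R := fst u * fst z + snd u * snd z.

Lemma dotC_self (z : C) : dotC z z = Cmod z ^ 2.
Proof. rewrite Cmod_sq; unfold dotC; ring. Qed.

Lemma dotC_le_Cmod (u z : C) : Rabs (dotC u z) <= Cmod u * Cmod z.
Proof.
  rewrite <- sqrt_Rsqr_abs, <- (sqrt_Rsqr (Cmod u * Cmod z))
    by (apply Rmult_le_pos; apply Cmod_ge_0).
  apply sqrt_le_1_alt; unfold Rsqr.
  replace (Cmod u * Cmod z * (Cmod u * Cmod z)) with (Cmod u ^ 2 * Cmod z ^ 2) by ring.
  rewrite !Cmod_sq; unfold dotC.
  pose proof (pow2_ge_0 (fst u * snd z - snd u * fst z)); nra.
Qed.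

Lemma continuous_dotC (w : C) (u : R -> C) x :
  continuous u x -> continuous (fun z => dotC w (u z)) x.
Proof.
  intros Hu; unfold dotC.
  apply (@continuous_plus _ _ R_NormedModule (fun z => fst w * fst (u z)) (fun z => snd w * snd (u z)));
    [apply (continuous_scal_r (fst w) (fun z => fst (u z))) |
     apply (continuous_scal_r (snd w) (fun z => snd (u z)))].
  - apply (continuous_comp u fst); [auto | apply continuous_fst].
  - apply (continuous_comp u snd); [auto | apply continuous_snd].
Qed.

Lemma is_derive_dotC_within (w : C) (u : R -> C) a b x l : a < x < b ->
  is_derive_within a b u x l -> is_derive (fun s => dotC w (u s)) x (dotC w l).
Proof.
  intros Hx Hd; destruct (is_derive_within_interior a b u x l Hx Hd) as [D1 D2].
  apply is_derive_Reals in D1; apply is_derive_Reals in D2; unfold dotC.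
  apply (is_derive_plus (fun s => fst w * fst (u s)) (fun s => snd w * snd (u s)));
    apply is_derive_scal; auto.
Qed.

Lemma Cmod_le_of_deriv_bound (h dh : R -> C) L t K m : 0 <= t <= L -> 0 <= K ->
  h 0 = 0%C -> continuous_on_cc 0 L h ->
  (forall x, 0 < x < L -> is_derive_within 0 L h x (dh x)) ->
  (forall s, 0 <= s <= t -> Cmod (dh s) <= K * s ^ m) ->
  Cmod (h t) <= K * t ^ S m / INR (S m).
Proof.
  intros Ht HK H0 Hc Hd Hb.
  assert (HSm : 0 < INR (S m)) by (apply lt_0_INR; lia).
  assert (Hrhs : 0 <= K * t ^ S m / INR (S m))
    by (apply Rmult_le_pos; [apply Rmult_le_pos; [lra | apply pow_le; lra] |
                             left; apply Rinv_0_lt_compat; lra]).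
  destruct (Req_dec t 0) as [->|Ht0]; [rewrite H0, Cmod_0; lra|].
  (* Project onto the direction of [w = h t] and compare with [c s ^ (m + 1)]. *)
  set (w := h t); set (c := Cmod w * K / INR (S m)).
  set (phi := fun s => dotC w (h s) - c * s ^ S m).
  assert (Hmono : phi t <= phi 0).
  { apply (nonincreasing_of_deriv_nonpos phi
             (fun s => dotC w (dh s) - c * (INR (S m) * s ^ m))); [lra | | |].
    - intros y Hy; unfold phi.
      apply (continuous_minus (V := R_NormedModule)
               (fun z => dotC w (h (clamp 0 t z))) (fun z => c * clamp 0 t z ^ S m)).
      + apply continuous_dotC, continuous_comp_clamp; [lra|]; intros y' Hy'.
        apply (within_restrict h 0 L); try lra; apply Hc; lra.
      + apply (continuous_comp (clamp 0 t) (fun s => c * s ^ S m));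
          [apply continuous_clamp; lra |].
        apply (@ex_derive_continuous R_AbsRing R_NormedModule); auto_derive; auto.
    - intros x Hx; apply is_derive_Reals, (is_derive_minus (fun s => dotC w (h s))).
      + apply (is_derive_dotC_within w h 0 L); [lra | apply Hd; lra].
      + auto_derive; auto; simpl; ring.
    - intros x Hx.
      pose proof (Rle_abs (dotC w (dh x))); pose proof (dotC_le_Cmod w (dh x)).
      pose proof (Rmult_le_compat_l (Cmod w) _ _ (Cmod_ge_0 w) (Hb x ltac:(lra))).
      replace (c * (INR (S m) * x ^ m)) with (Cmod w * (K * x ^ m)) by (unfold c; field; lra).
      lra. }
  unfold phi in Hmono; cbv beta in Hmono; rewrite H0 in Hmono; fold w in Hmono.
  replace (dotC w 0%C) with 0 in Hmono by (unfold dotC; simpl; ring).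
  rewrite dotC_self, pow_i in Hmono by lia.
  assert (Hsq : Cmod w * Cmod w <= Cmod w * (K * t ^ S m / INR (S m))).
  { replace (Cmod w * (K * t ^ S m / INR (S m))) with (c * t ^ S m) by (unfold c; field; lra).
    lra. }
  pose proof (Cmod_ge_0 w).
  destruct (Req_dec (Cmod w) 0) as [->|Hw0]; [lra|].
  apply (Rmult_le_reg_l (Cmod w)); lra.
Qed.

(** * Polynomials and Taylor's formula *)

Fixpoint rsum (n : nat) (f : nat -> R) : R :=
  match n with O => 0 | S m => rsum m f + f m end.

Lemma rsum_ext n f g : (forall k, (k < n)%nat -> f k = g k) -> rsum n f = rsum n g.
Proof.
  induction n; intros H; simpl; [reflexivity|].
  rewrite IHn by (intros; apply H; lia); rewrite H by lia; reflexivity.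
Qed.

Definition pev (n : nat) (c : nat -> R) (s : R) : R := rsum n (fun k => c k * s ^ k).

Lemma pev_ext n c c' s : (forall k, (k < n)%nat -> c k = c' k) -> pev n c s = pev n c' s.
Proof. intros H; apply rsum_ext; intros k Hk; rewrite H; auto. Qed.

Lemma pev_linear n (c1 c2 : nat -> R) u v s :
  pev n (fun k => u * c1 k + v * c2 k) s = u * pev n c1 s + v * pev n c2 s.
Proof. unfold pev; induction n; simpl; [ring | rewrite IHn; ring]. Qed.

Lemma pev_shift n c t : pev (S n) c t = c O + t * pev n (fun k => c (S k)) t.
Proof. unfold pev; induction n; simpl in *; [ring | rewrite IHn; ring]. Qed.

Lemma pev_deriv n c x :
  derivable_pt_lim (pev n c) x (pev (pred n) (fun k => c (S k) * INR (S k)) x).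
Proof.
  apply is_derive_Reals; induction n.
  - unfold pev; simpl; apply (is_derive_const 0).
  - replace (pev (pred (S n)) (fun k => c (S k) * INR (S k)) x) with
      (pev (pred n) (fun k => c (S k) * INR (S k)) x + c n * (INR n * 1 * x ^ pred n))
      by (destruct n; unfold pev; simpl; ring).
    apply (is_derive_plus (pev n c) (fun s => c n * s ^ n)); [exact IHn|].
    apply is_derive_scal, (is_derive_pow (fun s => s)), (@is_derive_id R_AbsRing).
Qed.

Lemma pev_continuous n c x : continuity_pt (pev n c) x.
Proof. apply derivable_continuous_pt; eexists; apply pev_deriv. Qed.

Definition cpev (n : nat) (a : nat -> C) (s : R) : C :=
  (pev n (fun k => fst (a k)) s, pev n (fun k => snd (a k)) s).

Lemma cpev_ext n a a' s : (forall k, (k < n)%nat -> a k = a' k) -> cpev n a s = cpev n a' s.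
Proof. intros H; unfold cpev; f_equal; apply pev_ext; intros k Hk; rewrite H; auto. Qed.

Lemma cpev_shift n a t : cpev (S n) a t = (a O + RtoC t * cpev n (fun k => a (S k)) t)%C.
Proof. unfold cpev; rewrite !pev_shift; apply injective_projections; simpl; ring. Qed.

Lemma cpev_zero n a : cpev (S n) a 0 = a O.
Proof. rewrite cpev_shift; apply injective_projections; simpl; ring. Qed.

Lemma cpev_deriv_within a b n (c : nat -> C) x :
  is_derive_within a b (cpev (S n) c) x
    (cpev n (fun k => c (S k) * RtoC (INR (S k)))%C x).
Proof.
  apply is_derive_within_of_components.
  - replace (fst (cpev n (fun k => c (S k) * RtoC (INR (S k)))%C x)) with
      (pev (pred (S n)) (fun k => fst (c (S k)) * INR (S k)) x)
      by (apply pev_ext; intros; simpl; ring).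
    apply (pev_deriv (S n) (fun k => fst (c k))).
  - replace (snd (cpev n (fun k => c (S k) * RtoC (INR (S k)))%C x)) with
      (pev (pred (S n)) (fun k => snd (c (S k)) * INR (S k)) x)
      by (apply pev_ext; intros; simpl; ring).
    apply (pev_deriv (S n) (fun k => snd (c k))).
Qed.

Lemma cpev_continuous_within n (c : nat -> C) (D : R -> Prop) y :
  filterlim (cpev n c) (within D (locally y)) (locally (cpev n c y)).
Proof.
  apply continuous_within_of_components; apply pev_continuous.
Qed.

Definition taylor_coef (D : nat -> R -> C) (j k : nat) : C :=
  (D (j + k)%nat 0 * RtoC (/ INR (fact k)))%C.

Lemma taylor_coef_succ D j k :
  (taylor_coef D j (S k) * RtoC (INR (S k)))%C = taylor_coef D (S j) k.
Proof.
  unfold taylor_coef; replace (j + S k)%nat with (S j + k)%nat by lia.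
  rewrite <- Cmult_assoc, <- RtoC_mult; do 2 f_equal.
  rewrite fact_simpl, mult_INR.
  pose proof (INR_fact_lt_0 k); pose proof (lt_0_INR (S k) ltac:(lia)).
  field; lra.
Qed.

Lemma taylor_remainder p L M f D : Cp_derivs p 0 L f D ->
  (forall t, 0 <= t <= L -> Cmod (D p t) <= M) ->
  forall m, (m <= p)%nat -> forall t, 0 <= t <= L ->
  Cmod (D (p - m)%nat t - cpev m (taylor_coef D (p - m)) t) <= M * t ^ m / INR (fact m).
Proof.
  intros [HD0 [HD1 HD2]] Hb m; induction m as [|m IHm]; intros Hm t Ht.
  - rewrite Nat.sub_0_r.
    replace (D p t - cpev 0 (taylor_coef D p) t)%C with (D p t)
      by (apply injective_projections; unfold cpev, pev; simpl; ring).
    simpl; rewrite Rmult_1_r, Rdiv_1_r; auto.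
  - assert (HM : 0 <= M) by (apply Rle_trans with (Cmod (D p 0)); [apply Cmod_ge_0 | apply Hb; lra]).
    assert (Hj : S (p - S m) = (p - m)%nat) by lia.
    replace (M * t ^ S m / INR (fact (S m))) with (M / INR (fact m) * t ^ S m / INR (S m))
      by (rewrite fact_simpl, mult_INR; pose proof (INR_fact_lt_0 m);
          pose proof (lt_0_INR (S m) ltac:(lia)); field; lra).
    apply (Cmod_le_of_deriv_bound
             (fun s => D (p - S m)%nat s - cpev (S m) (taylor_coef D (p - S m)) s)%C
             (fun s => D (p - m)%nat s - cpev m (taylor_coef D (p - m)) s)%C L);
      auto.
    + apply Rmult_le_pos; [auto | left; apply Rinv_0_lt_compat, INR_fact_lt_0].
    + rewrite cpev_zero; unfold taylor_coef; rewrite Nat.add_0_r.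
      apply injective_projections; simpl; rewrite Rinv_1; ring.
    + intros y Hy; apply continuous_within_minus;
        [apply HD2; [lia | auto] | apply cpev_continuous_within].
    + intros x Hx; apply is_derive_within_minus.
      * rewrite <- Hj; apply HD1; [lia | lra].
      * rewrite (cpev_ext m _ (fun k => taylor_coef D (p - S m) (S k) * RtoC (INR (S k)))%C)
          by (intros; rewrite taylor_coef_succ, Hj; reflexivity).
        apply cpev_deriv_within.
    + intros s Hs; replace (M / INR (fact m) * s ^ m) with (M * s ^ m / INR (fact m))
        by (unfold Rdiv; ring).
      apply IHm; [lia | lra].
Qed.

Lemma pev_dotC n w a s : pev n (fun k => dotC w (a k)) s = dotC w (cpev n a s).
Proof. unfold dotC, cpev; simpl; apply pev_linear. Qed.

(** * Lagrange interpolation *)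

Fixpoint rprod (n : nat) (f : nat -> R) : R :=
  match n with O => 1 | S m => rprod m f * f m end.

Lemma rsum_le n f g : (forall k, (k < n)%nat -> f k <= g k) -> rsum n f <= rsum n g.
Proof.
  induction n; intros H; simpl; [lra|].
  pose proof (IHn ltac:(intros; apply H; lia)); pose proof (H n ltac:(lia)); lra.
Qed.

Lemma rsum_nonneg n f : (forall k, (k < n)%nat -> 0 <= f k) -> 0 <= rsum n f.
Proof.
  induction n; intros H; simpl; [lra|].
  pose proof (IHn ltac:(intros; apply H; lia)); pose proof (H n ltac:(lia)); lra.
Qed.

Lemma rsum_term_le n f j : (forall k, (k < n)%nat -> 0 <= f k) -> (j < n)%nat ->
  f j <= rsum n f.
Proof.
  induction n; intros H Hj; simpl; [lia|].
  assert (H' : forall k, (k < n)%nat -> 0 <= f k) by (intros; apply H; lia).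
  destruct (Nat.eq_dec j n) as [->|Hne].
  - pose proof (rsum_nonneg n f H'); lra.
  - pose proof (IHn H' ltac:(lia)); pose proof (H n ltac:(lia)); lra.
Qed.

Lemma Rabs_rsum_le n f : Rabs (rsum n f) <= rsum n (fun k => Rabs (f k)).
Proof.
  induction n; simpl; [rewrite Rabs_R0; lra|].
  eapply Rle_trans; [apply Rabs_triang | lra].
Qed.

Lemma rsum_mult_r n f k : rsum n (fun j => f j * k) = rsum n f * k.
Proof. induction n; simpl; [ring | rewrite IHn; ring]. Qed.

Lemma rprod_ext n f g : (forall k, (k < n)%nat -> f k = g k) -> rprod n f = rprod n g.
Proof.
  induction n; intros H; simpl; [reflexivity|].
  rewrite IHn by (intros; apply H; lia); rewrite H by lia; reflexivity.
Qed.

Lemma Rabs_rprod n f : Rabs (rprod n f) = rprod n (fun k => Rabs (f k)).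
Proof. induction n; simpl; [apply Rabs_R1 | rewrite Rabs_mult, IHn; reflexivity]. Qed.

Lemma rprod_nonneg n f : (forall k, (k < n)%nat -> 0 <= f k) -> 0 <= rprod n f.
Proof.
  induction n; intros H; simpl; [lra|].
  apply Rmult_le_pos; [apply IHn; intros; apply H; lia | apply H; lia].
Qed.

Lemma rprod_le n f g : (forall k, (k < n)%nat -> 0 <= f k <= g k) -> rprod n f <= rprod n g.
Proof.
  induction n; intros H; simpl; [lra|].
  apply Rmult_le_compat; try (apply H; lia).
  - apply rprod_nonneg; intros; apply H; lia.
  - apply IHn; intros; apply H; lia.
Qed.

Lemma rprod_mult_r n f k : rprod n (fun j => f j * k) = rprod n f * k ^ n.
Proof. induction n; simpl; [ring | rewrite IHn; ring]. Qed.

(* Values beyond [n] are pushed past every node, so that the nodes become an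
   injective sequence as MathComp's Lagrange basis requires. *)
Definition extend_nodes (n : nat) (y : nat -> R) (k : nat) : R :=
  if Nat.ltb k n then y k else 1 + rsum n (fun j => Rabs (y j)) + INR k.

Lemma extend_nodes_inj n y :
  (forall i j, (i < n)%nat -> (j < n)%nat -> i <> j -> y i <> y j) ->
  forall i j, extend_nodes n y i = extend_nodes n y j -> i = j.
Proof.
  intros Hy i j; unfold extend_nodes.
  assert (Habs : forall k, (k < n)%nat -> 0 <= Rabs (y k)) by (intros; apply Rabs_pos).
  pose proof (rsum_nonneg n _ Habs).
  destruct (Nat.ltb_spec0 i n) as [Hi|Hi]; destruct (Nat.ltb_spec0 j n) as [Hj|Hj]; intros E.
  - destruct (Nat.eq_dec i j); auto; exfalso; apply (Hy i j); auto.
  - pose proof (rsum_term_le n _ i Habs Hi); pose proof (pos_INR j);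
      pose proof (Rle_abs (y i)); lra.
  - pose proof (rsum_term_le n _ j Habs Hj); pose proof (pos_INR i);
      pose proof (Rle_abs (y j)); lra.
  - apply INR_eq; lra.
Qed.

Module Lagrange.
Import ssreflect ssrfun ssrbool eqtype ssrnat seq fintype bigop ssralg poly qpoly Rstruct.
Import GRing.Theory.
Local Open Scope ring_scope.

Lemma rsumE n f : rsum n f = \sum_(i < n) f i.
Proof. elim: n => [|n IH] /=; first by rewrite big_ord0. by rewrite big_ord_recr /= IH. Qed.

Lemma rprodE n f : rprod n f = \prod_(i < n) f i.
Proof. elim: n => [|n IH] /=; first by rewrite big_ord0. by rewrite big_ord_recr /= IH. Qed.

Lemma pevE n c t : pev n c t = (\poly_(i < n) c i).[t].
Proof. rewrite /pev rsumE horner_poly; apply: eq_bigr => i _; by rewrite RpowE. Qed.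

Lemma pev_lagrange n (c y : nat -> R) t : (0 < n)%coq_nat ->
  (forall i j, (i < n)%coq_nat -> (j < n)%coq_nat -> i <> j -> y i <> y j) ->
  pev n c t = rsum n (fun i => pev n c (y i) *
     rprod n (fun j => if Nat.eqb j i then 1%R else ((t - y j) / (y i - y j))%R)).
Proof.
move=> /ltP n_gt0 yinj.
pose x := extend_nodes n y.
have xinj : injective x by move=> i j; apply: (extend_nodes_inj n y yinj).
have xy k : (k < n)%N -> x k = y k.
  by move=> kn; rewrite /x /extend_nodes; have -> : Nat.ltb k n = true by apply/Nat.ltb_spec0/ltP.
pose P := \poly_(i < n) c i.
have := lagrange_gen n_gt0 xinj (size_poly n c : (size P <= n)%N).
rewrite !pevE -/P rsumE => {1}->; rewrite horner_sum; apply: eq_bigr => i _ /=.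
rewrite hornerM hornerC (lagrangeE n_gt0 xinj) /= hornerM hornerC (xy i (ltn_ord i)).
rewrite rprodE -/P pevE -/P; congr (_ * _).
have Ex z : (\prod_(j < n | j != i) ('X - (x j)%:P)).[z] = \prod_(j < n | j != i) (z - y j).
  by rewrite horner_prod; apply: eq_bigr => j _; rewrite hornerXsubC xy.
rewrite !Ex [RHS](bigD1 i) //= Nat.eqb_refl mul1r mulrC -prodf_div.
apply: eq_bigr => j jni; have -> // : Nat.eqb j i = false.
by apply/negP => /Nat.eqb_spec H; move: jni; rewrite -val_eqE /= H eqxx.
Qed.

End Lagrange.

Lemma binomial_succ n i : (i < n)%nat ->
  Binomial.C (S n) (S i) = Binomial.C n (S i) * (INR n + 1) / (INR n - INR i).
Proof.
  intros Hi; unfold Binomial.C.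
  replace (S n - S i)%nat with (S (n - S i)) by lia.
  replace (n - i)%nat with (S (n - S i)) by lia.
  set (m := (n - S i)%nat).
  replace (INR n - INR i) with (INR (S m)) by (unfold m; rewrite <- minus_INR by lia; f_equal; lia).
  rewrite (fact_simpl n), (fact_simpl m), !mult_INR, !S_INR.
  pose proof (INR_fact_lt_0 n); pose proof (INR_fact_lt_0 m); pose proof (INR_fact_lt_0 (S i)).
  pose proof (pos_INR m); field; repeat split; lra.
Qed.

Lemma rprod_ratio_fact m k : (m <= k)%nat ->
  rprod m (fun j => (INR j + 1) / Rabs (INR k - INR j)) =
  INR (fact m) * INR (fact (k - m)) / INR (fact k).
Proof.
  induction m; intros Hmk; simpl rprod.
  - rewrite Nat.sub_0_r; change (INR (fact 0)) with 1; pose proof (INR_fact_lt_0 k); field; lra.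
  - rewrite IHm by lia.
    replace (Rabs (INR k - INR m)) with (INR (S (k - S m)))
      by (rewrite <- minus_INR, Rabs_right by (lia || apply Rle_ge, pos_INR); f_equal; lia).
    replace (k - m)%nat with (S (k - S m)) by lia.
    rewrite (fact_simpl m), (fact_simpl (k - S m)), !mult_INR, (S_INR m).
    pose proof (INR_fact_lt_0 k); pose proof (pos_INR (k - S m)); rewrite S_INR; field; lra.
Qed.

(* [|l_i(0)|] for the Lagrange basis [l_i] of the nodes [1, ..., n]. *)
Definition lagrange_weight (n i : nat) : R :=
  rprod n (fun j => if Nat.eqb j i then 1 else (INR j + 1) / Rabs (INR i - INR j)).

Lemma lagrange_weight_binomial n i : (i < n)%nat -> lagrange_weight n i = Binomial.C n (S i).
Proof.
  revert i; induction n; intros i Hi; [lia|].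
  unfold lagrange_weight; simpl rprod; fold (lagrange_weight n i).
  destruct (Nat.eq_dec i n) as [->|Hne].
  - rewrite Nat.eqb_refl, Rmult_1_r; unfold lagrange_weight.
    rewrite (rprod_ext n _ (fun j => (INR j + 1) / Rabs (INR n - INR j)))
      by (intros k Hk; destruct (Nat.eqb_spec k n); [lia | reflexivity]).
    rewrite rprod_ratio_fact, Nat.sub_diag by lia.
    unfold Binomial.C; rewrite Nat.sub_diag; simpl (fact 0); simpl (INR 1).
    pose proof (INR_fact_lt_0 n); pose proof (INR_fact_lt_0 (S n)); field; lra.
  - rewrite IHn by lia; destruct (Nat.eqb_spec n i); [lia|].
    assert (INR i < INR n) by (apply lt_INR; lia).
    rewrite binomial_succ, Rabs_left1 by (lia || lra); field; lra.
Qed.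

Lemma binomial_nonneg n i : 0 <= Binomial.C n i.
Proof.
  unfold Binomial.C; pose proof (INR_fact_lt_0 n); pose proof (INR_fact_lt_0 i).
  pose proof (INR_fact_lt_0 (n - i)); apply Rlt_le, Rdiv_lt_0_compat; auto.
  apply Rmult_lt_0_compat; auto.
Qed.

Lemma sum_binomial_le n : rsum n (fun i => Binomial.C n (S i)) <= 2 ^ n.
Proof.
  assert (Hsum : forall m, (m <= n)%nat -> sum_f_R0 (fun i => Binomial.C n i * 1 ^ i * 1 ^ (n - i)) m =
            Binomial.C n 0 + rsum m (fun i => Binomial.C n (S i))).
  { induction m; intros Hm; simpl; rewrite ?IHm by lia; rewrite !pow1; ring. }
  replace 2 with (1 + 1) by ring; rewrite binomial, Hsum by lia.
  pose proof (binomial_nonneg n 0); lra.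
Qed.

Section NodeInterpolation.

Variables (n : nat) (y : nat -> R) (h th : R).
Hypothesis Hh : 0 < h.
Hypothesis Hth : 0 <= th < 1.
Hypothesis Hy : forall j, (j < n)%nat -> (INR j + 1 - th) * h <= y j <= (INR j + 1) * h.

Lemma node_separation i j : (i < n)%nat -> (j < n)%nat -> i <> j ->
  Rabs (INR i - INR j) * (1 - th) * h <= Rabs (y i - y j).
Proof.
  intros Hi Hj Hij; pose proof (Hy i Hi); pose proof (Hy j Hj).
  destruct (Nat.lt_ge_cases i j) as [Hlt|Hge].
  - assert (INR i + 1 <= INR j) by (rewrite <- S_INR; apply le_INR; lia).
    rewrite (Rabs_left1 (INR i - INR j)), (Rabs_left1 (y i - y j)) by nra; nra.
  - assert (INR j + 1 <= INR i) by (rewrite <- S_INR; apply le_INR; lia).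
    rewrite (Rabs_right (INR i - INR j)), (Rabs_right (y i - y j)) by nra; nra.
Qed.

Lemma node_separation_pos i j : (i < n)%nat -> (j < n)%nat -> i <> j ->
  0 < Rabs (INR i - INR j) * (1 - th) * h.
Proof.
  intros Hi Hj Hij; repeat apply Rmult_lt_0_compat; try lra.
  apply Rabs_pos_lt; intros E; apply Hij, INR_eq; lra.
Qed.

Lemma nodes_distinct i j : (i < n)%nat -> (j < n)%nat -> i <> j -> y i <> y j.
Proof.
  intros Hi Hj Hij E; pose proof (node_separation i j Hi Hj Hij).
  pose proof (node_separation_pos i j Hi Hj Hij).
  rewrite E, Rminus_diag, Rabs_R0 in *; lra.
Qed.

Lemma lagrange_basis_bound t i : 0 <= t <= (1 - th) * h -> (i < n)%nat ->
  rprod n (fun j => Rabs (if Nat.eqb j i then 1 else (t - y j) / (y i - y j)))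
    <= Binomial.C n (S i) * / (1 - th) ^ n.
Proof.
  intros Ht Hi; rewrite <- lagrange_weight_binomial, <- pow_inv by auto.
  unfold lagrange_weight; rewrite <- rprod_mult_r.
  apply rprod_le; intros j Hj; split; [apply Rabs_pos|].
  destruct (Nat.eqb_spec j i) as [E|E].
  - rewrite Rabs_R1; assert (1 <= / (1 - th)) by (rewrite <- Rinv_1; apply Rinv_le_contravar; lra).
    lra.
  - pose proof (node_separation i j Hi Hj (not_eq_sym E)) as Hsep.
    pose proof (node_separation_pos i j Hi Hj (not_eq_sym E)).
    pose proof (Hy j Hj); pose proof (pos_INR j).
    assert ((1 - th) * h <= y j) by nra.
    rewrite Rabs_div by (intros Z; apply (nodes_distinct i j); auto; lra).
    rewrite (Rabs_left1 (t - y j)) by lra.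
    apply Rle_trans with ((INR j + 1) * h / (Rabs (INR i - INR j) * (1 - th) * h)).
    + apply Rmult_le_compat;
        [lra | left; apply Rinv_0_lt_compat; lra | lra | apply Rinv_le_contravar; lra].
    + assert (0 < Rabs (INR i - INR j)) by (apply Rabs_pos_lt; intros Z; apply E, INR_eq; lra).
      right; field; repeat split; lra.
Qed.

Lemma pev_bound_from_nodes c B t : 0 <= B ->
  (forall j, (j < n)%nat -> Rabs (pev n c (y j)) * y j <= B) ->
  0 <= t <= (1 - th) * h ->
  Rabs (pev n c t) * ((1 - th) ^ S n * h) <= B * 2 ^ n.
Proof.
  intros HB Hv Ht.
  destruct n as [|n'] eqn:En; [unfold pev; simpl; rewrite Rabs_R0; lra|].
  rewrite <- En in *.
  assert (Hk : 0 < (1 - th) ^ S n) by (apply pow_lt; lra).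
  rewrite (Lagrange.pev_lagrange n c y t) by (lia || apply nodes_distinct).
  assert (Hterm : forall i, (i < n)%nat ->
     Rabs (pev n c (y i) * rprod n (fun j => if Nat.eqb j i then 1 else (t - y j) / (y i - y j)))
       <= Binomial.C n (S i) * (B / ((1 - th) ^ S n * h))).
  { intros i Hi; rewrite Rabs_mult, Rabs_rprod.
    pose proof (Hy i Hi); pose proof (pos_INR i); pose proof (Hv i Hi).
    assert (Hyi : (1 - th) * h <= y i) by nra.
    assert (Hval : Rabs (pev n c (y i)) <= B / ((1 - th) * h)).
    { apply (Rmult_le_reg_r ((1 - th) * h)); [nra|].
      unfold Rdiv; rewrite Rmult_assoc, Rinv_l by nra.
      pose proof (Rmult_le_compat_l (Rabs (pev n c (y i))) _ _ (Rabs_pos _) Hyi); lra. }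
    eapply Rle_trans; [apply Rmult_le_compat;
      [apply Rabs_pos | apply rprod_nonneg; intros; apply Rabs_pos | exact Hval |
       apply lagrange_basis_bound; auto] |].
    pose proof (pow_lt (1 - th) n ltac:(lra)); right; simpl; field; repeat split; lra. }
  eapply Rle_trans; [apply Rmult_le_compat_r; [nra | apply Rabs_rsum_le] |].
  eapply Rle_trans; [apply Rmult_le_compat_r; [nra | apply rsum_le; exact Hterm] |].
  rewrite rsum_mult_r.
  pose proof (sum_binomial_le n).
  replace (rsum n (fun i => Binomial.C n (S i)) * (B / ((1 - th) ^ S n * h)) * ((1 - th) ^ S n * h))
    with (rsum n (fun i => Binomial.C n (S i)) * B) by (field; nra).
  nra.
Qed.

End NodeInterpolation.

(** * The integral estimate *)

Lemma bernoulli_ineq x m : -1 <= x -> 1 + INR m * x <= (1 + x) ^ m.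
Proof.
  intros Hx; induction m; [simpl; lra|].
  rewrite S_INR; simpl; pose proof (pos_INR m); nra.
Qed.

Lemma INR_le_pow2 n : INR n <= 2 ^ n.
Proof.
  induction n; [simpl; lra|].
  rewrite S_INR; simpl; pose proof (pow_R1_Rle 2 n ltac:(lra)); lra.
Qed.

Lemma pow_le_self x p : 0 <= x <= 1 -> (1 <= p)%nat -> x ^ p <= x.
Proof.
  intros Hx Hp; destruct p as [|p]; [lia|]; simpl.
  pose proof (pow_le x p ltac:(lra)); pose proof (pow_incr x 1 p ltac:(lra)).
  rewrite pow1 in *; nra.
Qed.

Lemma ratio_in_unit t b : 0 < b -> 0 <= t <= b -> 0 <= t / b <= 1.
Proof.
  intros Hb Ht; split; [apply Rmult_le_pos; [lra | left; apply Rinv_0_lt_compat; lra]|].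
  apply (Rmult_le_reg_r b); auto; unfold Rdiv; rewrite Rmult_assoc, Rinv_l; lra.
Qed.

Lemma bounded_choice {A : Type} (a : A) (P : nat -> A -> Prop) n :
  (forall j, (j < n)%nat -> exists x, P j x) ->
  exists y : nat -> A, forall j, (j < n)%nat -> P j (y j).
Proof.
  induction n as [|n IH]; intros H; [exists (fun _ => a); intros; lia|].
  destruct (IH (fun j Hj => H j ltac:(lia))) as [y Hy].
  destruct (H n ltac:(lia)) as [x Hx].
  exists (fun j => if Nat.eqb j n then x else y j); intros j Hj.
  destruct (Nat.eqb_spec j n) as [->|Hne]; [auto | apply Hy; lia].
Qed.

Definition core_const (n : nat) : R := 4 / (27 * (5 * INR n * 2 ^ n + 1)).

Section Core.

Variables (p : nat) (L M : R) (f : R -> C) (D : nat -> R -> C) (phi0 phi1 b : R).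
Hypothesis Hp : (1 <= p)%nat.
Hypothesis Hb : 0 < b.
Hypothesis HbL : b <= L.
Hypothesis Hcp : Cp_derivs p 0 L f D.
Hypothesis Hf0 : f 0 = 0%C.
Hypothesis Hbound : forall t, 0 <= t <= L -> Cmod (D p t) <= M.
Hypothesis HMb : M * b ^ p <= INR (fact p).

Let J := RInt (fun t => Cmod (f t - cexpi (phi1 * t + phi0)) ^ 2) 0 L.
Let n := (p - 1)%nat.

(* [f t = t * taylor_quot t + O(t ^ p)], using [f 0 = 0]. *)
Let taylor_quot (t : R) : C := cpev n (fun k => taylor_coef D 0 (S k)) t.

Lemma f_continuous : continuous_on_cc 0 L f.
Proof.
  destruct Hcp as [H0 [_ H2]]; intros y Hy P HP.
  rewrite <- (H0 y Hy) in HP; destruct (H2 O ltac:(lia) y Hy P HP) as [e He].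
  exists e; intros z Hz Hz'; rewrite <- (H0 z Hz'); apply He; auto.
Qed.

Lemma taylor_quot_remainder t : 0 <= t <= b -> Cmod (f t - RtoC t * taylor_quot t) <= t / b.
Proof.
  intros Ht; destruct Hcp as [H0 _].
  pose proof (taylor_remainder p L M f D Hcp Hbound p (le_n p) t ltac:(lra)) as HT.
  rewrite Nat.sub_diag, (H0 t ltac:(lra)) in HT.
  replace p with (S n) in HT at 1 by (unfold n; lia).
  rewrite cpev_shift in HT.
  replace (taylor_coef D 0 0) with (RtoC 0) in HT
    by (unfold taylor_coef; rewrite Nat.add_0_r, (H0 0 ltac:(lra)), Hf0; apply injective_projections; simpl; ring).
  replace (f t - (0 + RtoC t * cpev n (fun k => taylor_coef D 0 (S k)) t))%C
    with (f t - RtoC t * taylor_quot t)%C in HT by (apply injective_projections; simpl; ring).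
  eapply Rle_trans; [exact HT|].
  pose proof (INR_fact_lt_0 p).
  assert (Htb : 0 <= t / b <= 1) by (apply ratio_in_unit; lra).
  apply Rle_trans with ((t / b) ^ p); [| apply pow_le_self; auto].
  replace (t ^ p) with ((t / b) ^ p * b ^ p) by (rewrite <- Rpow_mult_distr; f_equal; field; lra).
  apply (Rmult_le_reg_r (INR (fact p))); auto.
  unfold Rdiv; rewrite Rmult_assoc, Rinv_l, Rmult_1_r by lra.
  pose proof (pow_le (t / b) p ltac:(lra)); nra.
Qed.

Lemma scaled_taylor_quot_le s : 0 <= s <= b -> s * Cmod (taylor_quot s) <= Cmod (f s) + 1.
Proof.
  intros Hs; pose proof (taylor_quot_remainder s Hs).
  pose proof (Cmod_sub_ge (f s) (RtoC s * taylor_quot s)) as Hsub.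
  rewrite Cmod_mult, Cmod_R, (Rabs_right s), Rabs_minus_sym in Hsub by lra.
  pose proof (Rle_abs (s * Cmod (taylor_quot s) - Cmod (f s))).
  pose proof (ratio_in_unit s b Hb Hs); lra.
Qed.

Let K := 5 * INR n * 2 ^ n.
Let tau := b / (3 * (K + 1)).

Lemma K_nonneg : 0 <= K.
Proof. unfold K; pose proof (pos_INR n); pose proof (pow_le 2 n ltac:(lra)); nra. Qed.

Lemma integral_ge_of_taylor_quot_bound :
  (forall t, 0 <= t <= tau -> Cmod (taylor_quot t) <= K / b) -> 4 / 9 * tau <= J.
Proof.
  intros Hq; pose proof K_nonneg.
  assert (Htau : 0 < tau <= b / 3).
  { unfold tau; split; [apply Rdiv_lt_0_compat; lra|].
    unfold Rdiv; apply Rmult_le_compat_l; [lra | apply Rinv_le_contravar; lra]. }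
  replace (4 / 9 * tau) with ((1 - 1 / 3) ^ 2 * (tau - 0)) by field.
  apply dist_cexpi_integral_ge_small; try lra; [apply f_continuous|].
  intros t Ht; pose proof (taylor_quot_remainder t ltac:(lra)) as Hrem.
  pose proof (Cmod_triangle (RtoC t * taylor_quot t) (f t - RtoC t * taylor_quot t)%C) as Htri.
  replace (RtoC t * taylor_quot t + (f t - RtoC t * taylor_quot t))%C with (f t) in Htri
    by (apply injective_projections; simpl; ring).
  rewrite Cmod_mult, Cmod_R, Rabs_right in Htri by lra.
  pose proof (Rmult_le_compat_l t _ _ ltac:(lra) (Hq t ltac:(lra))).
  assert (t * (K / b) + t / b <= 1 / 3).
  { replace (t * (K / b) + t / b) with (t * (K + 1) / b) by (field; lra).
    apply (Rmult_le_reg_r b); auto; unfold Rdiv; rewrite Rmult_assoc, Rinv_l by lra.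
    pose proof (Rmult_le_compat_r (K + 1) t tau ltac:(lra) ltac:(lra)).
    replace (tau * (K + 1)) with (b / 3) in * by (unfold tau; field; lra); lra. }
  lra.
Qed.

Section Windows.

Hypothesis Hn : (1 <= n)%nat.

Let h := b / INR n.
Let th := / (4 * INR n).

Lemma INR_n_ge_1 : 1 <= INR n.
Proof. apply (le_INR 1); auto. Qed.

Lemma window_param_bounds : 0 < h /\ 0 < th <= 1 / 4 /\ INR n * h = b.
Proof.
  pose proof INR_n_ge_1; unfold h, th; repeat split.
  - apply Rdiv_lt_0_compat; lra.
  - apply Rinv_0_lt_compat; lra.
  - apply (Rmult_le_reg_r (4 * INR n)); [lra|]; rewrite Rinv_l by lra; lra.
  - field; lra.
Qed.

Lemma integral_ge_of_large_window j : (j < n)%nat ->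
  (forall s, (INR j + 1 - th) * h <= s <= (INR j + 1) * h -> 3 / 2 <= Cmod (f s)) ->
  4 / 9 * tau <= J.
Proof.
  intros Hj Hlarge; destruct window_param_bounds as [Hh [Hth Hnh]]; pose proof INR_n_ge_1.
  assert (Hjn : INR j + 1 <= INR n) by (rewrite <- S_INR; apply le_INR; lia).
  pose proof (pos_INR j).
  eapply Rle_trans with ((3 / 2 - 1) ^ 2 * ((INR j + 1) * h - (INR j + 1 - th) * h)).
  2:{ apply dist_cexpi_integral_ge_large; try nra; [apply f_continuous|].
      intros t Ht; apply Hlarge; lra. }
  replace ((3 / 2 - 1) ^ 2 * ((INR j + 1) * h - (INR j + 1 - th) * h))
    with (b / (16 * INR n * INR n)) by (unfold th, h; field; lra).
  pose proof (INR_le_pow2 n); pose proof K_nonneg.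
  unfold tau; apply Rle_trans with (4 / 9 * (b / (3 * (5 * INR n * INR n + 1)))).
  - apply Rmult_le_compat_l; [lra|]; unfold Rdiv; apply Rmult_le_compat_l; [lra|].
    apply Rinv_le_contravar; unfold K; nra.
  - unfold Rdiv; rewrite <- Rmult_assoc, (Rmult_comm (4 * / 9) b), Rmult_assoc.
    apply Rmult_le_compat_l; [lra|].
    apply (Rmult_le_reg_r (3 * (5 * INR n * INR n + 1) * (16 * INR n * INR n))); [nra|].
    replace (4 * / 9 * / (3 * (5 * INR n * INR n + 1)) * (3 * (5 * INR n * INR n + 1) * (16 * INR n * INR n)))
      with (64 / 9 * INR n * INR n) by (field; nra).
    replace (/ (16 * INR n * INR n) * (3 * (5 * INR n * INR n + 1) * (16 * INR n * INR n)))
      with (3 * (5 * INR n * INR n + 1)) by (field; nra).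
    nra.
Qed.

Lemma tau_le_window_start : tau <= (1 - th) * h.
Proof.
  destruct window_param_bounds as [Hh [Hth Hnh]]; pose proof INR_n_ge_1.
  pose proof (INR_le_pow2 n); pose proof K_nonneg.
  apply Rle_trans with (b / (4 * INR n / 3)).
  - unfold tau, Rdiv; apply Rmult_le_compat_l; [lra|].
    apply Rinv_le_contravar; [lra | unfold K; nra].
  - replace (b / (4 * INR n / 3)) with (3 / 4 * h) by (unfold h; field; lra).
    apply Rmult_le_compat_r; lra.
Qed.

Lemma window_shrink_pow_ge : 1 / 2 <= (1 - th) ^ S n.
Proof.
  destruct window_param_bounds as [Hh [Hth Hnh]]; pose proof INR_n_ge_1.
  assert ((INR n + 1) * th <= 1 / 2).
  { unfold th; apply (Rmult_le_reg_r (4 * INR n)); [lra|].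
    rewrite Rmult_assoc, Rinv_l by lra; lra. }
  pose proof (bernoulli_ineq (- th) (S n) ltac:(lra)) as Hbern.
  rewrite S_INR in Hbern; replace (1 + - th) with (1 - th) in Hbern by ring; nra.
Qed.

Lemma taylor_quot_bound_of_nodes (y : nat -> R) :
  (forall j, (j < n)%nat ->
     (INR j + 1 - th) * h <= y j <= (INR j + 1) * h /\ Cmod (f (y j)) < 3 / 2) ->
  forall t, 0 <= t <= tau -> Cmod (taylor_quot t) <= K / b.
Proof.
  intros Hy t Ht; destruct window_param_bounds as [Hh [Hth Hnh]]; pose proof INR_n_ge_1.
  set (w := taylor_quot t); pose proof (Cmod_ge_0 w).
  (* Interpolate the real polynomial [s |-> <w, taylor_quot s>], which equals [|w|^2] at [t]. *)
  set (c := fun k => dotC w (taylor_coef D 0 (S k))).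
  assert (Hc : forall s, pev n c s = dotC w (taylor_quot s)) by (intros; apply pev_dotC).
  assert (Hnodes : forall j, (j < n)%nat -> Rabs (pev n c (y j)) * y j <= Cmod w * (5 / 2)).
  { intros j Hj; destruct (Hy j Hj) as [Hyj Hfy].
    assert (Hjn : INR j + 1 <= INR n) by (rewrite <- S_INR; apply le_INR; lia).
    pose proof (pos_INR j); pose proof (scaled_taylor_quot_le (y j) ltac:(nra)).
    rewrite Hc; eapply Rle_trans; [apply Rmult_le_compat_r; [nra | apply dotC_le_Cmod] |].
    rewrite Rmult_assoc, (Rmult_comm (Cmod (taylor_quot (y j)))).
    apply Rmult_le_compat_l; lra. }
  pose proof (pev_bound_from_nodes n y h th Hh ltac:(lra) (fun j Hj => proj1 (Hy j Hj))
                c (Cmod w * (5 / 2)) t ltac:(lra) Hnodes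
                ltac:(pose proof tau_le_window_start; lra)) as Hinterp.
  rewrite Hc, dotC_self, Rabs_right in Hinterp by (apply Rle_ge, pow2_ge_0).
  pose proof window_shrink_pow_ge.
  destruct (Req_dec (Cmod w) 0) as [->|Hw0];
    [apply Rmult_le_pos; [apply K_nonneg | left; apply Rinv_0_lt_compat; lra] |].
  apply (Rmult_le_reg_l (Cmod w * (1 / 2 * h))); [nra|].
  replace (Cmod w * (1 / 2 * h) * (K / b)) with (Cmod w * (5 / 2 * 2 ^ n))
    by (unfold K; rewrite <- Hnh; field; lra).
  assert (Cmod w ^ 2 * (1 / 2 * h) <= Cmod w ^ 2 * ((1 - th) ^ S n * h))
    by (apply Rmult_le_compat_l; [apply pow2_ge_0 | nra]).
  fold w in Hinterp; nra.
Qed.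

End Windows.

Lemma core_bound : core_const n * b <= J.
Proof.
  pose proof K_nonneg.
  replace (core_const n * b) with (4 / 9 * tau) by (unfold core_const, tau, K in *; field; lra).
  destruct (Nat.eq_dec n 0) as [En|En].
  - apply integral_ge_of_taylor_quot_bound; intros t Ht.
    unfold taylor_quot; rewrite En; replace (cpev 0 _ t) with (RtoC 0) by reflexivity; rewrite Cmod_0.
    apply Rmult_le_pos; [lra | left; apply Rinv_0_lt_compat; lra].
  - assert (Hn : (1 <= n)%nat) by lia.
    destruct (classic (exists j, (j < n)%nat /\ forall s,
      (INR j + 1 - / (4 * INR n)) * (b / INR n) <= s <= (INR j + 1) * (b / INR n) ->
      3 / 2 <= Cmod (f s))) as [[j [Hj Hlarge]] | Hsmall].
    + exact (integral_ge_of_large_window Hn j Hj Hlarge).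
    + apply integral_ge_of_taylor_quot_bound.
      destruct (bounded_choice 0 (fun j s =>
        (INR j + 1 - / (4 * INR n)) * (b / INR n) <= s <= (INR j + 1) * (b / INR n) /\
        Cmod (f s) < 3 / 2) n) as [y Hy].
      { intros j Hj; apply NNPP; intros Hne; apply Hsmall; exists j; split; auto.
        intros s Hs; apply Rnot_lt_le; intros Hlt; apply Hne; exists s; auto. }
      exact (taylor_quot_bound_of_nodes Hn y Hy).
Qed.

End Core.

(** * Constants *)

Lemma exp_pow_INR x n : exp x ^ n = exp (INR n * x).
Proof.
  induction n; [simpl; rewrite Rmult_0_l, exp_0; reflexivity|].
  rewrite S_INR; simpl; rewrite IHn, <- exp_plus; f_equal; ring.
Qed.

Lemma one_plus_inv_pow_le_3 p : (1 <= p)%nat -> (1 + / INR p) ^ p <= 3.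
Proof.
  intros Hp; assert (Hp0 : 0 < INR p) by (apply lt_0_INR; lia).
  apply Rle_trans with (exp (/ INR p) ^ p).
  - apply pow_incr; split; [pose proof (Rinv_0_lt_compat _ Hp0); lra | apply exp_ineq1_le].
  - rewrite exp_pow_INR, Rinv_r by lra; apply exp_le_3.
Qed.

Lemma fact_ge_pow p : (1 <= p)%nat -> 3 * (INR p / 3) ^ p <= INR (fact p).
Proof.
  induction p as [|p IH]; intros Hp; [lia|].
  destruct (Nat.eq_dec p 0) as [->|Hp0]; [simpl; lra|].
  assert (HP : 0 < INR p) by (apply lt_0_INR; lia).
  rewrite fact_simpl, mult_INR, S_INR.
  replace (3 * ((INR p + 1) / 3) ^ S p) with ((INR p + 1) * ((INR p + 1) / 3) ^ p)
    by (simpl; field).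
  replace ((INR p + 1) / 3) with (INR p / 3 * (1 + / INR p)) by (field; lra).
  apply Rmult_le_compat_l; [lra|].
  rewrite Rpow_mult_distr; pose proof (one_plus_inv_pow_le_3 p ltac:(lia)).
  pose proof (IH ltac:(lia)); pose proof (pow_le (INR p / 3) p ltac:(lra)); nra.
Qed.

(* [72 * 2 ^ p = 9 * 4 ^ ((p + 3) / 2)] relates the second constant of the theorem
   to [core_const]. *)
Lemma fact_core_const_pow_ge_6 p : (1 <= p)%nat ->
  6 <= INR (fact p) * (72 * 2 ^ p * core_const (p - 1)) ^ p.
Proof.
  intros Hp; unfold core_const.
  destruct (Nat.eq_dec p 1) as [->|Hp1]; [simpl; lra|].
  set (n := (p - 1)%nat); assert (En : p = S n) by (unfold n; lia).
  assert (Hn : 1 <= INR n) by (apply (le_INR 1); unfold n; lia).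
  pose proof (pow_R1_Rle 2 n ltac:(lra)).
  assert (Hq : 3 / INR n <= 72 * 2 ^ p * (4 / (27 * (5 * INR n * 2 ^ n + 1)))).
  { rewrite En; simpl (2 ^ S n).
    apply (Rmult_le_reg_r (INR n * (27 * (5 * INR n * 2 ^ n + 1)))); [nra|].
    replace (3 / INR n * (INR n * (27 * (5 * INR n * 2 ^ n + 1))))
      with (81 * (5 * INR n * 2 ^ n + 1)) by (field; lra).
    replace (72 * (2 * 2 ^ n) * (4 / (27 * (5 * INR n * 2 ^ n + 1))) *
             (INR n * (27 * (5 * INR n * 2 ^ n + 1)))) with (576 * 2 ^ n * INR n) by (field; nra).
    nra. }
  assert (H3 : 0 <= 3 / INR n) by (apply Rmult_le_pos; [lra | left; apply Rinv_0_lt_compat; lra]).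
  apply Rle_trans with (INR (fact p) * (3 / INR n) ^ p).
  2:{ apply Rmult_le_compat_l; [left; apply INR_fact_lt_0 | apply pow_incr; auto]. }
  apply Rle_trans with (3 * (INR p / 3) ^ p * (3 / INR n) ^ p).
  2:{ apply Rmult_le_compat_r; [apply pow_le; auto | apply fact_ge_pow; auto]. }
  rewrite Rmult_assoc, <- Rpow_mult_distr.
  replace (INR p / 3 * (3 / INR n)) with (1 + / INR n) by (rewrite En, S_INR; field; lra).
  assert (Hinv : 0 < / INR n) by (apply Rinv_0_lt_compat; lra).
  pose proof (Rle_pow_lin (/ INR n) p ltac:(lra)).
  assert (INR p * / INR n >= 1) by (rewrite En, S_INR, Rmult_plus_distr_r, Rinv_r by lra; lra).
  lra.
Qed.

Lemma Rpower_pos x y : 0 < Rpower x y.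
Proof. apply exp_pos. Qed.

Lemma core_const_first_regime p s : (1 <= p)%nat -> 0 < s ->
  s / 9 * Rpower 4 (- INR p - 5 / 2) <= core_const (p - 1) * (/ 2 * s).
Proof.
  intros Hp Hs; unfold core_const; set (n := (p - 1)%nat).
  assert (Hsqrt4 : Rpower 4 (/ 2) = 2).
  { rewrite Rpower_sqrt by lra; replace 4 with (2 * 2) by ring; apply sqrt_square; lra. }
  replace (Rpower 4 (- INR p - 5 / 2)) with (/ (32 * (2 ^ n * 2 ^ n) * 4)).
  2:{ replace (- INR p - 5 / 2) with (- (INR n + INR 3 + / 2))
        by (unfold n; rewrite minus_INR by lia; simpl; field).
      rewrite Rpower_Ropp, !Rpower_plus, Hsqrt4, !Rpower_pow by lra.
      replace (4 ^ n) with (2 ^ n * 2 ^ n) by (rewrite <- Rpow_mult_distr; f_equal; ring).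
      simpl; f_equal; ring. }
  pose proof (INR_le_pow2 n); pose proof (pow_R1_Rle 2 n ltac:(lra)).
  pose proof (pos_INR n).
  apply (Rmult_le_reg_r (27 * (5 * INR n * 2 ^ n + 1) * (32 * (2 ^ n * 2 ^ n) * 4) * 18 / s)).
  { apply Rdiv_lt_0_compat; [repeat apply Rmult_lt_0_compat|]; nra. }
  replace (s / 9 * / (32 * (2 ^ n * 2 ^ n) * 4) *
           (27 * (5 * INR n * 2 ^ n + 1) * (32 * (2 ^ n * 2 ^ n) * 4) * 18 / s))
    with (54 * (5 * INR n * 2 ^ n + 1)) by (field; split; nra).
  replace (4 / (27 * (5 * INR n * 2 ^ n + 1)) * (/ 2 * s) *
           (27 * (5 * INR n * 2 ^ n + 1) * (32 * (2 ^ n * 2 ^ n) * 4) * 18 / s))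
    with (4608 * (2 ^ n * 2 ^ n)) by (field; split; nra).
  nra.
Qed.

Lemma ln_le_compat x y : 0 < x -> x <= y -> ln x <= ln y.
Proof.
  intros Hx [Hxy | <-]; [left; apply ln_increasing; auto | lra].
Qed.

Lemma le_of_ln_le x y : 0 < x -> 0 < y -> ln x <= ln y -> x <= y.
Proof.
  intros Hx Hy Hln; apply Rnot_lt_le; intros Hlt.
  pose proof (ln_increasing y x Hy Hlt); lra.
Qed.

Lemma core_const_second_regime p lam Cp : (1 <= p)%nat -> 0 < lam -> 0 < Cp ->
  Rpower lam (- / 2) / 9 *
    (Rpower 4 (- ((INR p + 3) / 2)) * Rpower 6 (/ INR p)
     * Rpower Cp (- / INR p) * Rpower lam (- / INR p))
  <= core_const (p - 1) * Rpower (INR (fact p) / (Cp * Rpower lam (INR p / 2 + 1))) (/ INR p).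
Proof.
  intros Hp Hlam HCp.
  assert (Hp0 : 0 < INR p) by (apply lt_0_INR; lia).
  assert (HQ : 0 < core_const (p - 1)).
  { unfold core_const; pose proof (pos_INR (p - 1)); pose proof (pow_le 2 (p - 1) ltac:(lra)).
    apply Rdiv_lt_0_compat; nra. }
  assert (HM : 0 < Cp * Rpower lam (INR p / 2 + 1)) by (apply Rmult_lt_0_compat; auto; apply Rpower_pos).
  pose proof (INR_fact_lt_0 p).
  set (W := INR (fact p) * (72 * 2 ^ p * core_const (p - 1)) ^ p).
  assert (HW : 0 < 72 * 2 ^ p * core_const (p - 1))
    by (pose proof (pow_lt 2 p ltac:(lra)); apply Rmult_lt_0_compat; lra).
  assert (Hln6 : ln 6 <= ln W) by (apply ln_le_compat; [lra | apply fact_core_const_pow_ge_6; auto]).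
  assert (H2p : 0 < 2 ^ p) by (apply pow_lt; lra).
  assert (HlnW : ln W = ln (INR (fact p)) + INR p * (ln 72 + INR p * ln 2 + ln (core_const (p - 1)))).
  { unfold W; rewrite ln_mult, ln_pow by (auto || apply pow_lt; auto).
    rewrite ln_mult, ln_mult, ln_pow by (auto || lra); reflexivity. }
  assert (Hln72 : ln 72 = ln 9 + 3 * ln 2)
    by (replace 72 with (9 * 2 ^ 3) by ring; rewrite ln_mult, ln_pow by lra; simpl; ring).
  assert (Hln4 : ln 4 = 2 * ln 2)
    by (replace 4 with (2 ^ 2) by ring; rewrite ln_pow by lra; simpl; ring).
  apply le_of_ln_le; [repeat apply Rmult_lt_0_compat; try apply Rpower_pos; lra |
                      apply Rmult_lt_0_compat; [auto | apply Rpower_pos] |].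
  unfold Rdiv.
  repeat rewrite ?ln_mult, ?ln_Rinv, ?ln_Rpower
    by (repeat first [assumption | apply Rmult_lt_0_compat | apply Rinv_0_lt_compat | apply Rpower_pos | lra]).
  match goal with |- ?lhs <= ?rhs =>
    assert (Hgap : rhs - lhs = / INR p * (ln W - ln 6))
      by (rewrite HlnW, Hln72, Hln4; field; lra) end.
  assert (0 <= / INR p * (ln W - ln 6))
    by (apply Rmult_le_pos; [left; apply Rinv_0_lt_compat | ]; lra).
  lra.
Qed.

Theorem corollary4p6 (lam : R) (p : nat) (Cp : R) (f : R -> C)
  (D : nat -> R -> C)
  (hlam : 0 < lam) (hp : (1 <= p)%nat) (hC : 0 < Cp)
  (hf : Cp_derivs p 0 (/ 2 * Rpower lam (- / 2)) f D)
  (hf0 : f 0 = 0%C)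
  (hbound : forall t, 0 <= t <= / 2 * Rpower lam (- / 2) ->
     Cmod (D p t) <= Cp * Rpower lam (INR p / 2 + 1)) :
  forall phi0 phi1 : R,
    RInt (fun t => Cmod (f t - cexpi (phi1 * t + phi0)) ^ 2)
         0 (/ 2 * Rpower lam (- / 2))
    >= Rpower lam (- / 2) / 9 *
       Rmin (Rpower 4 (- INR p - 5 / 2))
            (Rpower 4 (- ((INR p + 3) / 2)) * Rpower 6 (/ INR p)
             * Rpower Cp (- / INR p) * Rpower lam (- / INR p)).
Proof.
  intros phi0 phi1; apply Rle_ge.
  pose proof (Rpower_pos lam (- / 2)) as Hs.
  set (L := / 2 * Rpower lam (- / 2)) in *; assert (HL : 0 < L) by (unfold L; lra).
  set (M := Cp * Rpower lam (INR p / 2 + 1)) in *.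
  assert (HM : 0 < M) by (apply Rmult_lt_0_compat; [auto | apply Rpower_pos]).
  pose proof (INR_fact_lt_0 p); assert (Hp0 : 0 < INR p) by (apply lt_0_INR; lia).
  destruct (Rle_dec (M * L ^ p) (INR (fact p))) as [HML|HML].
  - eapply Rle_trans; [| apply (core_bound p L M f D phi0 phi1 L); auto; lra].
    eapply Rle_trans; [apply Rmult_le_compat_l; [lra | apply Rmin_l] |].
    apply core_const_first_regime; auto.
  - set (b := Rpower (INR (fact p) / M) (/ INR p)).
    assert (Hbp : M * b ^ p = INR (fact p)).
    { unfold b; rewrite <- Rpower_pow, Rpower_mult, Rinv_l, Rpower_1 by
        (lra || apply Rpower_pos || apply Rdiv_lt_0_compat; lra); field; lra. }
    assert (HbL : b <= L).
    { apply Rnot_lt_le; intros HLb; apply HML.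
      rewrite <- Hbp; apply Rmult_le_compat_l; [lra | apply pow_incr; lra]. }
    eapply Rle_trans;
      [| apply (core_bound p L M f D phi0 phi1 b); auto; [apply Rpower_pos | lra]].
    eapply Rle_trans; [apply Rmult_le_compat_l; [lra | apply Rmin_r] |].
    apply core_const_second_regime; auto.
Qed.
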